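(* In the one-vs-all multi-class setting, let $\hat c$ be the clean predicted class of test node $t$. For each $c\in[K]$ let $P^c$ denote the feasible set of the sample-wise MILP constraints (with binary labels $\mathbf{y}^c$ in place of $\mathbf{y}$ and budget $\lfloor\epsilon m\rfloor$, big-M values $M_{u_i}=\sum_jC|Q_{ij}|-1$, $M_{v_i}=\sum_jC|Q_{ij}|+1$), namely variables $\boldsymbol{\alpha},\tilde{\mathbf{y}},\mathbf{z},\mathbf{u},\mathbf{v}\in\mathbb{R}^m$, $\mathbf{y}',\mathbf{s},\mathbf{t}\in\{0,1\}^m$, $\mathbf{R}\in\mathbb{R}^{m\times m}$ with $\sum_i(1-y^c_i\tilde y_i)\le2\lfloor\epsilon m\rfloor$ and for all $i,j$: $\tilde y_i=2y_i'-1$, $\sum_jR_{ij}Q_{ij}-1-u_i+v_i=0$, $u_i,v_i\ge0$, $-C(1+\tilde y_i)\le R_{ij}+z_j\le C(1+\tilde y_i)$, $-C(1-\tilde y_i)\le R_{ij}-z_j\le C(1-\tilde y_i)$, $-\alpha_i\le z_i\le\alpha_i$, $\alpha_i-C(1-\tilde y_i)\le z_i\le C(1+\tilde y_i)-\alpha_i$, $u_i\le M_{u_i}s_i$, $\alpha_i\le C(1-s_i)$, $v_i\le M_{v_i}t_i$, $\alpha_i\ge Ct_i$. Let $m_{\hat c}=\min_{P^{\hat c}}\sum_iz_iQ_{ti}$ and, for $c\ne\hat c$, $M_c=\max_{P^c}\sum_iz_iQ_{ti}$. If $m_{\hat c}>\max_{c\ne\hat c}M_c$, then the prediction for $t$ is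 certifiably robust, i.e. $p_{\hat c}(\tilde{\mathbf{y}})-\max_{c\ne\hat c}p_c(\tilde{\mathbf{y}})>0$ for all $\tilde{\mathbf{y}}\in\mathcal{A}(\mathbf{y})$.
   Context: Setting: $K$ classes, $m$ labeled nodes, $C>0$, symmetric positive semidefinite kernel $\mathbf{Q}$ on labeled nodes and kernel values $Q_{ti}$ of test node $t$. For $\mathbf{w}\in\{-1,1\}^m$ the bias-free SVM dual is $\min_{\boldsymbol\alpha}-\sum_i\alpha_i+\tfrac12\sum_{i,j}w_iw_j\alpha_i\alpha_jQ_{ij}$ s.t. $0\le\alpha_i\le C$, with solution set $\mathcal{S}(\mathbf{w})$. For $\tilde{\mathbf{y}}\in[K]^m$, $\tilde{\mathbf{y}}^c\in\{-1,1\}^m$ has $\tilde y^c_i=1$ iff $\tilde y_i=c$, and $p_c(\tilde{\mathbf{y}})=\sum_i\tilde y^c_i\alpha^c_iQ_{ti}$ for $\boldsymbol\alpha^c\in\mathcal{S}(\tilde{\mathbf{y}}^c)$; the predicted class is $\arg\max_cp_c$. $\mathbf{y}^c$ is defined analogously from the clean labels $\mathbf{y}\in[K]^m$. $\mathcal{A}(\mathbf{y})=\{\tilde{\mathbf{y}}\in[K]^m:\|\tilde{\mathbf{y}}-\mathbf{y}\|_0\le\lfloor\epsilon m\rfloor\}$. *)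

From HB Require Import structures.
From mathcomp Require Import all_boot all_order all_algebra.
From mathcomp Require Import reals.
Set Implicit Arguments. Unset Strict Implicit. Unset Printing Implicit Defensive.
Import Order.TTheory GRing.Theory Num.Theory.
Local Open Scope ring_scope.

Section Defs.
Variables (R : realType) (K m : nat).

Definition binlab (yy : 'I_m -> 'I_K) (c : 'I_K) : 'I_m -> R :=
  fun i => if yy i == c then 1 else -1.

(* bias-free SVM dual objective *)
Definition svm_obj (Q : 'M[R]_m) (w a : 'I_m -> R) : R :=
  - (\sum_i a i) + 2^-1 * \sum_i \sum_j w i * w j * a i * a j * Q i j.

Definition svm_box (C : R) (a : 'I_m -> R) : Prop := forall i, 0 <= a i <= C.

Definition svm_sol (C : R) (Q : 'M[R]_m) (w a : 'I_m -> R) : Prop :=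
  svm_box C a /\ forall b, svm_box C b -> svm_obj Q w a <= svm_obj Q w b.

Definition pscore (Qt : 'I_m -> R) (w a : 'I_m -> R) : R :=
  \sum_i w i * a i * Qt i.

Definition budget (eps : R) : int := Num.floor (eps * m%:R).

Definition in_attack (eps : R) (y yt : 'I_m -> 'I_K) : Prop :=
  (#|[set i | yt i != y i]|%:Z <= budget eps)%R.

Definition is01 (x : R) : Prop := x = 0 \/ x = 1.

Definition milp_feas (C : R) (Q : 'M[R]_m) (yc : 'I_m -> R) (eps : R)
  (alpha yt z u v y' s t : 'I_m -> R) (Rm : 'I_m -> 'I_m -> R) : Prop :=
  let Mu i := \sum_j C * `|Q i j| - 1 in
  let Mv i := \sum_j C * `|Q i j| + 1 in
  (\sum_i (1 - yc i * yt i) <= 2 * (budget eps)%:~R) /\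
  (forall i, [/\ is01 (y' i), is01 (s i) & is01 (t i)]) /\
  (forall i, yt i = 2 * y' i - 1) /\
  (forall i, \sum_j Rm i j * Q i j - 1 - u i + v i = 0 /\ 0 <= u i /\ 0 <= v i) /\
  (forall i j, - (C * (1 + yt i)) <= Rm i j + z j <= C * (1 + yt i)
               /\ - (C * (1 - yt i)) <= Rm i j - z j <= C * (1 - yt i)) /\
  (forall i, - alpha i <= z i <= alpha i
               /\ alpha i - C * (1 - yt i) <= z i <= C * (1 + yt i) - alpha i) /\
  (forall i, [/\ u i <= Mu i * s i, alpha i <= C * (1 - s i),
                    v i <= Mv i * t i & alpha i >= C * t i]).

Definition milp_value (C : R) (Q : 'M[R]_m) (Qt : 'I_m -> R) (yc : 'I_m -> R)
  (eps : R) (x : R) : Prop :=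
  exists alpha yt z u v y' s t Rm,
    milp_feas C Q yc eps alpha yt z u v y' s t Rm /\ x = \sum_i z i * Qt i.

Definition is_min_of (P : R -> Prop) (x : R) : Prop :=
  P x /\ forall y, P y -> x <= y.
Definition is_max_of (P : R -> Prop) (x : R) : Prop :=
  P x /\ forall y, P y -> y <= x.

End Defs.

(** A solution of the SVM dual for the attacked binary labels, together with
    the attacked labels themselves, is a feasible point of the MILP P^c: the
    dual variables give z_i = w_i alpha_i and R_ij = w_i w_j alpha_j, the
    positive and negative parts of the gradient give u and v, and the KKT
    conditions (a coordinate with positive gradient is 0, one with negative
    gradient is C) justify the big-M constraints.  The budget constraint holds
    because each flipped label changes exactly one binary label by 2.  Hence
    every attacked score p_c lies between the MILP minimum and maximum for its
    class, and the strict gap between them certifies the prediction. *)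

From HB Require Import structures.
From mathcomp Require Import all_boot all_order all_algebra.
From mathcomp Require Import reals ring lra.
Import Order.TTheory GRing.Theory Num.Theory.
Local Open Scope ring_scope.

Lemma sum_mul_delta {R : pzSemiRingType} {m : nat} (i : 'I_m) (d : R) (F : 'I_m -> R) :
  \sum_k (if k == i then d else 0) * F k = d * F i.
Proof.
by rewrite (bigD1 i) //= eqxx big1 ?addr0 // => k /negbTE ->; rewrite mul0r.
Qed.

Lemma quad_ge0_near0_slope_ge0 (R : realFieldType) (D g q : R) :
  0 < D -> (forall d, 0 < d <= D -> 0 <= d * g + 2^-1 * (d * (d * q))) ->
  0 <= g.
Proof.
move=> D_gt0 quad_ge0; rewrite leNgt; apply/negP => g_lt0.
have q1_gt0 : 0 < `|q| + 1 by have := normr_ge0 q; lra.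
pose d := Num.min D (- g / (`|q| + 1)).
have d_gt0 : 0 < d by rewrite lt_min D_gt0 divr_gt0 //; lra.
have dq_le : d * `|q| <= - g.
  have : d <= - g / (`|q| + 1) by rewrite ge_min lexx orbT.
  rewrite ler_pdivlMr // => /(le_trans _); apply; have := normr_ge0 q; nra.
have q_le : d * (d * q) <= d * (d * `|q|).
  by rewrite ler_pM2l // ler_pM2l // ler_norm.
have := quad_ge0 d; rewrite d_gt0 ge_min lexx /= => /(_ isT); nra.
Qed.

Section SvmDual.
Variables (R : realType) (m : nat) (C : R) (Q : 'M[R]_m).
Hypothesis Q_sym : forall i j, Q j i = Q i j.

Definition svm_grad (w a : 'I_m -> R) (i : 'I_m) : R :=
  \sum_j w i * w j * a j * Q i j - 1.

Lemma svm_obj_shift (w a : 'I_m -> R) (i : 'I_m) (d : R) :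
  svm_obj Q w (fun k => a k + (if k == i then d else 0)) =
  svm_obj Q w a + d * svm_grad w a i + 2^-1 * (d * (d * (w i * w i * Q i i))).
Proof.
rewrite /svm_obj /svm_grad.
set D := fun k : 'I_m => if k == i then d else 0.
have sum_shift : \sum_k (a k + D k) = \sum_k a k + d.
  rewrite big_split /=; congr (_ + _).
  rewrite -[RHS]mulr1 -(sum_mul_delta i d (fun _ => 1)).
  by apply: eq_bigr => k _; rewrite mulr1.
have quad_shift : \sum_k \sum_l w k * w l * (a k + D k) * (a l + D l) * Q k l =
   \sum_k \sum_l w k * w l * a k * a l * Q k l
   + \sum_k D k * (\sum_l w k * w l * a l * Q k l)
   + \sum_l D l * (\sum_k w k * w l * a k * Q k l)
   + \sum_k D k * (\sum_l D l * (w k * w l * Q k l)).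
  have -> : \sum_l D l * (\sum_k w k * w l * a k * Q k l) =
     \sum_k \sum_l D l * (w k * w l * a k * Q k l).
    by rewrite exchange_big /=; apply: eq_bigr => l _; rewrite mulr_sumr.
  rewrite -!big_split /=; apply: eq_bigr => k _.
  by rewrite !mulr_sumr -!big_split /=; apply: eq_bigr => l _; ring.
rewrite sum_shift quad_shift !sum_mul_delta.
have -> : \sum_k w k * w i * a k * Q k i = \sum_j w i * w j * a j * Q i j.
  by apply: eq_bigr => k _; rewrite Q_sym; ring.
by field.
Qed.

Variables (w a : 'I_m -> R).
Hypothesis a_sol : svm_sol C Q w a.

Lemma svm_sol_shift_ge0 (i : 'I_m) (d : R) : 0 <= a i + d <= C ->
  0 <= d * svm_grad w a i + 2^-1 * (d * (d * (w i * w i * Q i i))).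
Proof.
move=> shift_box; have [a_box a_opt] := a_sol.
have box : svm_box C (fun k => a k + (if k == i then d else 0)).
  by move=> k; case: (k =P i) => [->|_] //; rewrite addr0.
by have := a_opt _ box; rewrite svm_obj_shift; lra.
Qed.

Lemma svm_sol_grad_ge0 {i : 'I_m} : a i < C -> 0 <= svm_grad w a i.
Proof.
move=> ai_ltC; have /andP [ai_ge0 _] := a_sol.1 i.
apply: (@quad_ge0_near0_slope_ge0 _ (C - a i)) => [|d /andP [d_gt0 d_le]].
  by rewrite subr_gt0.
by apply: svm_sol_shift_ge0; apply/andP; split; lra.
Qed.

Lemma svm_sol_grad_le0 {i : 'I_m} : 0 < a i -> svm_grad w a i <= 0.
Proof.
move=> ai_gt0; have /andP [_ ai_leC] := a_sol.1 i.
rewrite -oppr_ge0.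
apply: (@quad_ge0_near0_slope_ge0 _ (a i) _ (w i * w i * Q i i))
  => // d /andP [d_gt0 d_le].
have := @svm_sol_shift_ge0 i (- d).
have shift_box : 0 <= a i + - d <= C by apply/andP; split; lra.
by rewrite mulrN !mulNr !mulrN opprK => /(_ shift_box).
Qed.

Lemma svm_sol_grad_gt0 {i : 'I_m} : 0 < svm_grad w a i -> a i = 0.
Proof.
move=> g_gt0; have /andP [ai_ge0 _] := a_sol.1 i.
apply/eqP; rewrite eq_le ai_ge0 andbT leNgt; apply/negP => /svm_sol_grad_le0.
by rewrite leNgt g_gt0.
Qed.

Lemma svm_sol_grad_lt0 {i : 'I_m} : svm_grad w a i < 0 -> a i = C.
Proof.
move=> g_lt0; have /andP [_ ai_leC] := a_sol.1 i.
apply/eqP; rewrite eq_le ai_leC /= leNgt; apply/negP => /svm_sol_grad_ge0.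
by rewrite leNgt g_lt0.
Qed.

Hypothesis w_sign : forall i, w i = 1 \/ w i = -1.

Lemma svm_sol_grad_bound (i : 'I_m) :
  `|svm_grad w a i + 1| <= \sum_j C * `|Q i j|.
Proof.
rewrite /svm_grad subrK; apply: le_trans (ler_norm_sum _ _ _) _.
apply: ler_sum => j _; have /andP [aj_ge0 aj_leC] := a_sol.1 j.
have norm_w k : `|w k| = 1 by case: (w_sign k) => ->; rewrite ?normrN normr1.
by rewrite !normrM !norm_w (ger0_norm aj_ge0) !mul1r ler_wpM2r.
Qed.

Lemma svm_sol_milp_value (Qt : 'I_m -> R) (yc : 'I_m -> R) (eps : R) :
  \sum_i (1 - yc i * w i) <= 2 * (budget m eps)%:~R ->
  milp_value C Q Qt yc eps (pscore Qt w a).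
Proof.
move=> in_budget; pose g := svm_grad w a.
exists a, w, (fun k => w k * a k),
  (fun k => if 0 < g k then g k else 0), (fun k => if g k < 0 then - g k else 0),
  (fun k => if w k == 1 then 1 else 0),
  (fun k => if 0 < g k then 1 else 0), (fun k => if g k < 0 then 1 else 0),
  (fun i j => w i * (w j * a j)).
split=> //; split=> //.
have ind01 (b : bool) : is01 (if b then 1 else 0 : R) by case: b; [right|left].
split; first by move=> i; split; apply: ind01.
split.
  have Nm1_neq1 : ((-1 : R) == 1) = false by apply/eqP; lra.
  by move=> i; case: (w_sign i) => ->; rewrite ?eqxx ?Nm1_neq1; lra.
split.
  move=> i; have -> : \sum_j w i * (w j * a j) * Q i j = g i + 1.
    by rewrite /g /svm_grad subrK; apply: eq_bigr => j _; ring.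
  by case: (ltrgtP 0 (g i)) => [|//|<-]; lra.
split.
  move=> i j; have /andP [aj_ge0 aj_leC] := a_sol.1 j.
  by case: (w_sign i) => ->; case: (w_sign j) => ->; split; apply/andP; split; lra.
split.
  move=> i; have /andP [ai_ge0 ai_leC] := a_sol.1 i.
  by case: (w_sign i) => ->; split; apply/andP; split; lra.
move=> i; have /andP [ai_ge0 ai_leC] := a_sol.1 i.
have := svm_sol_grad_bound i; rewrite ler_norml -/g => /andP [g_lb g_ub].
case: (ltrgtP 0 (g i)) => [g_gt0|g_lt0|_].
- by rewrite (svm_sol_grad_gt0 g_gt0); split; lra.
- by rewrite (svm_sol_grad_lt0 g_lt0); split; lra.
- by split; lra.
Qed.

End SvmDual.

Lemma binlab_sign (R : realType) (K m : nat) (y : 'I_m -> 'I_K) (c : 'I_K) i :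
  binlab R y c i = 1 \/ binlab R y c i = -1.
Proof. by rewrite /binlab; case: ifP; [left|right]. Qed.

Lemma in_attack_binlab_budget (R : realType) (K m : nat) (eps : R)
    (y yt : 'I_m -> 'I_K) (c : 'I_K) : in_attack eps y yt ->
  \sum_i (1 - binlab R y c i * binlab R yt c i) <= 2 * (budget m eps)%:~R.
Proof.
move=> attack; apply: (@le_trans _ _ (\sum_i (if yt i != y i then 2 else 0))).
  apply: ler_sum => i _; rewrite /binlab.
  case: (yt i =P y i) => [->|_] /=; first by case: ifP => _; lra.
  by case: ifP => _; case: ifP => _; lra.
rewrite -big_mkcond /= sumr_const -cardsE -[(2 : R) *+ _]mulr_natr.
by rewrite ler_pM2l // pmulrn ler_int.
Qed.

Theorem mainTheorem7 (R : realType) (K m : nat) (C eps : R)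
  (Q : 'M[R]_m) (Qt : 'I_m -> R) (y : 'I_m -> 'I_K) (chat : 'I_K) :
  0 < C ->
  Q^T = Q ->
  (forall x : 'rV[R]_m, 0 <= (x *m Q *m x^T) 0 0) ->
  (* chat is the clean predicted class *)
  (exists alpha0 : 'I_K -> 'I_m -> R,
      (forall c, svm_sol C Q (binlab R y c) (alpha0 c)) /\
      forall c, pscore Qt (binlab R y c) (alpha0 c)
                <= pscore Qt (binlab R y chat) (alpha0 chat)) ->
  (* m_chat = min over P^chat, M_c = max over P^c, and m_chat > max_{c<>chat} M_c *)
  (exists mhat : R,
      is_min_of (milp_value C Q Qt (binlab R y chat) eps) mhat /\
      forall c, c != chat ->
        exists Mc : R, is_max_of (milp_value C Q Qt (binlab R y c) eps) Mc /\ Mc < mhat) ->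
  forall yt : 'I_m -> 'I_K, in_attack eps y yt ->
  forall alpha : 'I_K -> 'I_m -> R,
    (forall c, svm_sol C Q (binlab R yt c) (alpha c)) ->
    forall c, c != chat ->
      pscore Qt (binlab R yt c) (alpha c) < pscore Qt (binlab R yt chat) (alpha chat).
Proof.
move=> _ Q_tr _ _ [mhat [[_ mhat_min] Mc_gap]] yt attack alpha alpha_sol c c_neq.
have Q_sym i j : Q j i = Q i j by rewrite -[in LHS]Q_tr mxE.
have score_feasible c' : milp_value C Q Qt (binlab R y c') eps
                           (pscore Qt (binlab R yt c') (alpha c')).
  apply: svm_sol_milp_value => //; first exact: binlab_sign.
  exact: in_attack_binlab_budget.
have [Mc [[_ Mc_max] Mc_lt]] := Mc_gap c c_neq.
apply: le_lt_trans (Mc_max _ (score_feasible c)) _.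
exact: lt_le_trans Mc_lt (mhat_min _ (score_feasible chat)).
Qed.
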